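(* If $A\in G$ fixes $Q$, then for any $a,b\in\mathrm{supp}\,Q$, $\langle Ab,a\rangle\ne0$ implies $a=b$ or $a$ $Q$-dominates $b$.
   Context: $\Gamma$ is a finite simplicial graph with vertex set $X$, $|X|=2g$, $A_\Gamma$ its right-angled Artin group, $H_\Gamma$ its abelianization, $\langle-,-\rangle$ the inner product on $H_\Gamma$ making the images of $X$ orthonormal; letters of $L=X\cup X^{-1}$ also denote their images in $H_\Gamma$; $\bar u\in X$ is the vertex of $u\in L$. $\mathrm{lk}(v)$ = neighbours, $\mathrm{st}(v)=\mathrm{lk}(v)\cup\{v\}$; $v\ge w$ iff $\mathrm{lk}(w)\subset\mathrm{st}(v)$, extended to letters via vertices. Fix a bijection $u\mapsto u^*$ of $L$ with $(u^* )^*=u^{-1}$ and letters $a_1,\dots,a_g$ whose vertices with those of $a_1^*,\dots,a_g^*$ are all of $X$; $Q=\sum\{[a_i]\wedge[a_i^*]:\bar a_i^*\text{ adjacent to }\bar a_i\}\in\Lambda^2H_\Gamma$, assumed nonzero, with diagonal action of $\mathrm{Aut}\,H_\Gamma$. $\mathrm{supp}\,Q$ = set of vertices appearing in $Q$. $G\le\mathrm{Aut}\,H_\Gamma$ is generated by the maps $E_{a,b}$ ($a\in X$, $b\in\mathrm{supp}\,Q$, $a\ge b$, $a\ne b$; $b\mapsto b+a$, other basis vectors fixed) and $N_b$ ($b\in\mathrm{supp}\,Q$; $b\mapsto -b$, others fixed). $Q$-domination on $\mathrm{supp}\,Q$: $a$ $Q$-dominates $b$ if either $a\ne\bar{b^*}$,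 $a\ge b$ and $b^*\ge a^*$; or $a=\bar{b^*}$ and $a\ge b$. *)

From mathcomp Require Import all_boot all_order all_algebra.
Set Implicit Arguments. Unset Strict Implicit. Unset Printing Implicit Defensive.
Import Order.TTheory GRing.Theory Num.Theory.
Local Open Scope ring_scope.

Section RAAG.
Variable V : finType.
Variable adj : rel V.

Definition lk (v : V) : {set V} := [set w | adj v w].
Definition st (v : V) : {set V} := v |: lk v.
Definition vge (v w : V) : bool := lk w \subset st v.

(* Letters: (x, true) is x, (x, false) is x^-1. *)
Definition letter := (V * bool)%type.
Definition bar (u : letter) : V := u.1.
Definition linv (u : letter) : letter := (u.1, ~~ u.2).
(* elements of H_Gamma = Z^X, as coordinate functions *)
Definition lvec (u : letter) : V -> int :=
  fun y => if y == u.1 then (if u.2 then 1 else -1) else 0.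

(* Lambda^2 H modelled as alternating coefficient functions c : V -> V -> int,
   with  omega = sum_{x<y} c x y  (x /\ y)  (c skew, zero diagonal). *)
Definition wedge (u v : V -> int) : V -> V -> int :=
  fun p q => u p * v q - u q * v p.

(* Endomorphisms of H: A x y = < A e_x , e_y > *)
Definition endo := V -> V -> int.
Definition idE : endo := fun x y => if x == y then 1 else 0.
Definition comp (B A : endo) : endo := fun x z => \sum_(y : V) A x y * B y z.
(* diagonal action on Lambda^2 H:  (A.omega) = sum c x y (A x /\ A y) *)
Definition actL2 (A : endo) (c : V -> V -> int) : V -> V -> int :=
  fun p q => \sum_(x : V) \sum_(y : V) c x y * A x p * A y q.

Definition Etr (a b : V) : endo := fun x y =>
  if x == b then (if y == b then 1 else 0) + (if y == a then 1 else 0)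
  else idE x y.
Definition Etr_inv (a b : V) : endo := fun x y =>
  if x == b then (if y == b then 1 else 0) - (if y == a then 1 else 0)
  else idE x y.
Definition Ninv (b : V) : endo := fun x y =>
  if x == y then (if x == b then -1 else 1) else 0.

Variable g : nat.
Variable star : letter -> letter.
Variable a : 'I_g -> letter.

Definition Qterm (i : 'I_g) : bool := adj (bar (star (a i))) (bar (a i)).
Definition Q : V -> V -> int :=
  fun p q => \sum_(i < g | Qterm i) wedge (lvec (a i)) (lvec (star (a i))) p q.
Definition suppQ : {set V} :=
  [set x | [exists i, Qterm i && ((x == bar (a i)) || (x == bar (star (a i))))]].

Inductive inG : endo -> Prop :=
| inG_id : inG idE
| inG_E : forall (x y : V) (A : endo), y \in suppQ -> vge x y -> x != y ->
    inG A -> inG (comp (Etr x y) A)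
| inG_Einv : forall (x y : V) (A : endo), y \in suppQ -> vge x y -> x != y ->
    inG A -> inG (comp (Etr_inv x y) A)
| inG_N : forall (y : V) (A : endo), y \in suppQ -> inG A -> inG (comp (Ninv y) A)
| inG_ext : forall A B : endo, inG A -> (forall x y, A x y = B x y) -> inG B.

Definition vstar (v : V) : V := bar (star (v, true)).
Definition Qdom (x y : V) : bool :=
  ((x != vstar y) && vge x y && vge (vstar y) (vstar x))
  || ((x == vstar y) && vge x y).
End RAAG.

(* Each generator of G is triangular for the domination preorder: E_{u,v}
   only adds u >= v to v, and N_v is diagonal.  Hence A and its inverse B
   are triangular as well: <A y, x> != 0 forces x >= y.  As Q pairs each
   p in supp Q only with p^*, the equation A.Q = Q together with B A = 1
   collapses to Q(y^*, y) <A y, x> = <B x^*, y^*> Q(x^*, x), so that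
   <A y, x> != 0 also forces y^* >= x^* (or y^* = x^*, i.e. y = x). *)

From mathcomp Require Import all_boot all_order all_algebra ring.
Set Implicit Arguments. Unset Strict Implicit. Unset Printing Implicit Defensive.
Import Order.TTheory GRing.Theory Num.Theory.
Local Open Scope ring_scope.

Section Endomorphisms.
Variable V : finType.
Implicit Types (A B C : endo V) (F : V -> int).

Lemma sum_kronecker_l F c : \sum_y (if y == c then 1 else 0) * F y = F c.
Proof.
rewrite (bigD1 c) //= eqxx mul1r big1 ?addr0 // => y /negbTE ->.
by rewrite mul0r.
Qed.

Lemma sum_kronecker_r F c : \sum_y (if c == y then 1 else 0) * F y = F c.
Proof. by rewrite -(sum_kronecker_l F c); apply: eq_bigr => y _; rewrite eq_sym. Qed.

Lemma sum_neq0 F : \sum_y F y != 0 -> exists y, F y != 0.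
Proof.
move=> nz_sum; apply/existsP; apply: contraNT nz_sum => /existsPn F0.
by apply/eqP/big1 => y _; apply/eqP/negPn/F0.
Qed.

Lemma comp_eq2 B B' A A' : B =2 B' -> A =2 A' -> comp B A =2 comp B' A'.
Proof. by move=> eqB eqA x z; apply: eq_bigr => y _; rewrite eqA eqB. Qed.

Lemma compA C B A : comp C (comp B A) =2 comp (comp C B) A.
Proof.
move=> x w; rewrite /comp.
under eq_bigr => z _ do rewrite big_distrl /=.
rewrite exchange_big; apply: eq_bigr => y _; rewrite big_distrr.
by apply: eq_bigr => z _ /=; rewrite mulrA.
Qed.

Lemma comp_idl A : comp (@idE V) A =2 A.
Proof.
move=> x z; rewrite /comp /idE (bigD1 z) //= eqxx mulr1 big1 ?addr0 //.
by move=> y /negbTE ->; rewrite mulr0.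
Qed.

Lemma comp_left_inverse B A E E' :
  comp E' E =2 @idE V -> comp B A =2 @idE V ->
  comp (comp B E') (comp E A) =2 @idE V.
Proof.
move=> E'E BA x z; rewrite -compA -BA; apply: comp_eq2 => // p q.
by rewrite compA (comp_eq2 E'E (fun _ _ => erefl)) comp_idl.
Qed.

Lemma EtrK u v : u != v -> comp (Etr_inv u v) (Etr u v) =2 @idE V.
Proof.
move=> neq_uv x z; rewrite /comp {1}/Etr.
case: (eqVneq x v) => [->|neq_xv]; last first.
  by rewrite /idE sum_kronecker_r /Etr_inv (negbTE neq_xv).
under eq_bigr => y _ do rewrite mulrDl.
rewrite big_split /= !sum_kronecker_l /Etr_inv eqxx (negbTE neq_uv) /idE.
by rewrite [u == z]eq_sym [v == z]eq_sym subrK.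
Qed.

Lemma Etr_invK u v : u != v -> comp (Etr u v) (Etr_inv u v) =2 @idE V.
Proof.
move=> neq_uv x z; rewrite /comp {1}/Etr_inv.
case: (eqVneq x v) => [->|neq_xv]; last first.
  by rewrite /idE sum_kronecker_r /Etr (negbTE neq_xv).
under eq_bigr => y _ do rewrite mulrBl.
rewrite sumrB /= !sum_kronecker_l /Etr eqxx (negbTE neq_uv) /idE.
by rewrite [u == z]eq_sym [v == z]eq_sym addrK.
Qed.

Lemma NinvK b : comp (Ninv b) (Ninv b) =2 @idE V.
Proof.
move=> x z; rewrite /comp (bigD1 x) //= big1 ?addr0; last first.
  by move=> y neq_yx; rewrite /Ninv eq_sym (negbTE neq_yx) mul0r.
rewrite /Ninv /idE eqxx; case: (x == z); last by rewrite mulr0.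
by case: (x == b); rewrite ?mulrNN mulr1.
Qed.

Lemma actL2_fixed_adjoint A B (c : V -> V -> int) :
  (forall p q, actL2 A c p q = c p q) -> comp B A =2 @idE V ->
  forall p q, \sum_y c p y * A y q = \sum_x B x p * c x q.
Proof.
move=> fix_c BA p q.
under [RHS]eq_bigr => x _ do rewrite -fix_c /actL2 big_distrr /=.
rewrite exchange_big /=.
transitivity (\sum_r comp B A r p * \sum_y c r y * A y q); last first.
  apply: eq_bigr => r _; rewrite /comp big_distrl; apply: eq_bigr => x _ /=.
  rewrite !big_distrr; apply: eq_bigr => y _ /=; ring.
under [RHS]eq_bigr => r _ do rewrite BA.
by rewrite sum_kronecker_l.
Qed.

End Endomorphisms.

Section Domination.
Variable V : finType.
Variable adj : rel V.
Hypothesis adj_sym : symmetric adj.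

Lemma vge_trans : transitive (vge adj).
Proof.
move=> y x z /subsetP le_yx /subsetP le_zy; apply/subsetP => w w_lkz.
case/setU1P: (le_zy w w_lkz) => [def_w|]; last exact: le_yx.
move: w_lkz; rewrite def_w inE => adj_zy.
have /le_yx/setU1P[def_z|adj_xz]: z \in lk adj y by rewrite inE adj_sym.
  by rewrite !inE -def_z adj_zy orbT.
have /le_zy/setU1P[->|]: x \in lk adj z by rewrite inE adj_sym -inE.
  by rewrite !inE eqxx.
by rewrite !inE adj_sym => ->; rewrite orbT.
Qed.

Definition vge_triangular (B : endo V) :=
  forall x y, B y x != 0 -> x = y \/ vge adj x y.

Lemma vge_triangular_eq2 (A B : endo V) :
  A =2 B -> vge_triangular A -> vge_triangular B.
Proof. by move=> eqAB trA x y; rewrite -eqAB; apply: trA. Qed.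

Lemma vge_triangular_diag (B : endo V) :
  (forall x y, x != y -> B x y = 0) -> vge_triangular B.
Proof.
move=> Bdiag x y; case: (eqVneq x y) => [-> _|neq_xy]; first by left.
by rewrite Bdiag ?eqxx // eq_sym.
Qed.

Lemma vge_triangular_idE : vge_triangular (@idE V).
Proof. by apply: vge_triangular_diag => x y /negbTE; rewrite /idE => ->. Qed.

Lemma vge_triangular_Ninv b : vge_triangular (Ninv b).
Proof. by apply: vge_triangular_diag => x y /negbTE; rewrite /Ninv => ->. Qed.

Lemma vge_triangular_Etr u v : vge adj u v -> vge_triangular (Etr u v).
Proof.
move=> le_vu x y; rewrite /Etr; case: (eqVneq y v) => [->|neq_yv].
  case: (eqVneq x v) => [->|_]; first by left.
  by case: (eqVneq x u) => [->|_]; [right|rewrite addr0 eqxx].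
exact: vge_triangular_idE.
Qed.

Lemma vge_triangular_Etr_inv u v : vge adj u v -> vge_triangular (Etr_inv u v).
Proof.
move=> le_vu x y; rewrite /Etr_inv; case: (eqVneq y v) => [->|neq_yv].
  case: (eqVneq x v) => [->|_]; first by left.
  by case: (eqVneq x u) => [->|_]; [right|rewrite subr0 eqxx].
exact: vge_triangular_idE.
Qed.

Lemma vge_triangular_comp (B A : endo V) :
  vge_triangular B -> vge_triangular A -> vge_triangular (comp B A).
Proof.
move=> trB trA x y /sum_neq0[w]; rewrite mulf_eq0 negb_or => /andP[Ayw Bwx].
case: (trA w y Ayw) => [<-|le_yw]; first exact: trB.
case: (trB x w Bwx) => [->|le_wx]; first by right.
by right; apply: vge_trans le_wx le_yw.
Qed.

Variable g : nat.
Variable star : letter V -> letter V.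
Variable a : 'I_g -> letter V.

Lemma inG_vge_triangular A : inG adj star a A -> vge_triangular A.
Proof.
elim=> [|u v {}A _ le_vu _ _ trA|u v {}A _ le_vu _ _ trA|b {}A _ _ trA|{}A B _ trA eqAB].
- exact: vge_triangular_idE.
- exact: vge_triangular_comp (vge_triangular_Etr le_vu) trA.
- exact: vge_triangular_comp (vge_triangular_Etr_inv le_vu) trA.
- exact: vge_triangular_comp (@vge_triangular_Ninv b) trA.
- exact: vge_triangular_eq2 eqAB trA.
Qed.

Lemma inG_left_inverse A : inG adj star a A ->
  exists2 B, vge_triangular B & comp B A =2 @idE V.
Proof.
elim=> [|u v {}A _ le_vu neq_uv _ [B trB BA]|u v {}A _ le_vu neq_uv _ [B trB BA]
        |b {}A _ _ [B trB BA]|{}A A' _ [B trB BA] eqAA'].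
- by exists (@idE V); [exact: vge_triangular_idE | exact: comp_idl].
- exists (comp B (Etr_inv u v)); last exact: comp_left_inverse (EtrK neq_uv) BA.
  exact: vge_triangular_comp trB (vge_triangular_Etr_inv le_vu).
- exists (comp B (Etr u v)); last exact: comp_left_inverse (Etr_invK neq_uv) BA.
  exact: vge_triangular_comp trB (vge_triangular_Etr le_vu).
- exists (comp B (Ninv b)); last exact: comp_left_inverse (NinvK b) BA.
  exact: vge_triangular_comp trB (@vge_triangular_Ninv b).
- by exists B => // x z; rewrite -BA; apply: comp_eq2.
Qed.

End Domination.

Section QForm.
Variable V : finType.
Variable adj : rel V.
Hypothesis adj_irr : irreflexive adj.
Variable g : nat.
Hypothesis cardV : #|V| = (2 * g)%N.
Variable star : letter V -> letter V.
Hypothesis star_star : forall u, star (star u) = linv u.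
Variable a : 'I_g -> letter V.
Hypothesis a_cover : forall x : V, exists i : 'I_g,
  x = bar (a i) \/ x = bar (star (a i)).

Implicit Types (u : letter V) (p q : V) (F : V -> int).

Local Notation vs := (vstar star).
Local Notation QQ := (Q adj star a).
Local Notation S := (suppQ adj star a).

Lemma star_linv u : star (linv u) = linv (star u).
Proof. by rewrite -star_star star_star. Qed.

Lemma bar_star u : bar (star u) = vs (bar u).
Proof.
case: u => x [] //=; rewrite /vstar.
by rewrite -[(x, false)]/(linv (x, true)) star_linv.
Qed.

Lemma vstar_bar_star u : vs (bar (star u)) = bar u.
Proof. by rewrite -bar_star star_star. Qed.

Lemma vstarK : involutive vs.
Proof. by move=> v; rewrite {2}/vstar vstar_bar_star. Qed.

Lemma lvec_eq0 u p : p != bar u -> lvec u p = 0.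
Proof. by rewrite /lvec /bar => /negbTE ->. Qed.

Lemma lvec_bar_neq0 u : lvec u (bar u) != 0.
Proof. by rewrite /lvec /bar eqxx; case: u.2. Qed.

Definition term_vertex (p : 'I_g * bool) : V :=
  if p.2 then bar (a p.1) else bar (star (a p.1)).

(* The [2 g] term vertices cover the [2 g] vertices, so they are distinct. *)
Lemma term_vertex_inj : injective term_vertex.
Proof.
pose T := @predT ('I_g * bool).
suff /image_injP inj : #|image term_vertex T| == #|T| by move=> ? ? /inj->.
rewrite eqn_leq leq_image_card /=.
have -> : #|T| = #|V|.
  by rewrite cardT -cardE card_prod card_ord card_bool cardV mulnC.
apply/subset_leq_card/subsetP => x _.
by have [i [->|->]] := a_cover x; apply/imageP; [exists (i, true) | exists (i, false)].
Qed.

Lemma Q_antisym p q : QQ p q = - QQ q p.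
Proof. by rewrite /Q -sumrN; apply: eq_bigr => i _; rewrite /wedge opprB. Qed.

Lemma Q_eq0 p q : q != vs p -> QQ p q = 0.
Proof.
move=> neq_q; rewrite /Q big1 // => i _; rewrite /wedge.
have -> : lvec (a i) p * lvec (star (a i)) q = 0.
  have [def_p|] := eqVneq p (bar (a i)); last by move/lvec_eq0->; rewrite mul0r.
  by rewrite (@lvec_eq0 (star (a i)) q) ?mulr0 // bar_star -def_p.
have -> : lvec (a i) q * lvec (star (a i)) p = 0.
  have [def_p|] := eqVneq p (bar (star (a i))); last by move/lvec_eq0->; rewrite mulr0.
  by rewrite (@lvec_eq0 (a i) q) ?mul0r // -(vstar_bar_star (a i)) -def_p.
by rewrite subrr.
Qed.

Lemma suppQ_vstar p : p \in S -> vs p \in S.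
Proof.
rewrite !inE => /existsP[i /andP[Qi p_i]]; apply/existsP; exists i; rewrite Qi /=.
by case/orP: p_i => /eqP->; rewrite ?vstar_bar_star -?bar_star eqxx ?orbT.
Qed.

Lemma Q_vstar_neq0 p : p \in S -> QQ p (vs p) != 0.
Proof.
rewrite inE => /existsP[i /andP[Qi p_i]].
have p_j b j : j != i -> p != term_vertex (j, b).
  move=> neq_ji; apply: contraNneq neq_ji => def_p.
  have [b' def_p'] : exists b', p = term_vertex (i, b').
    by case/orP: p_i => /eqP->; [exists true | exists false].
  by have [->] := term_vertex_inj (etrans (esym def_p) def_p').
rewrite /Q (bigD1 i) //= big1 ?addr0; last first.
  move=> j /andP[_ neq_ji]; rewrite /wedge.
  rewrite (lvec_eq0 (p_j true j neq_ji)) (lvec_eq0 (p_j false j neq_ji)).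
  by rewrite mul0r mulr0 subrr.
have neq_bar : bar (star (a i)) != bar (a i).
  by apply: contraTneq Qi; rewrite /Qterm => ->; rewrite adj_irr.
rewrite /wedge; case/orP: p_i => /eqP->.
  rewrite -bar_star (@lvec_eq0 (a i) (bar (star (a i)))) // mul0r subr0.
  by rewrite mulf_neq0 // lvec_bar_neq0.
rewrite vstar_bar_star (@lvec_eq0 (star (a i)) (bar (a i))); last by rewrite eq_sym.
by rewrite mulr0 sub0r oppr_eq0 mulf_neq0 // lvec_bar_neq0.
Qed.

Lemma sum_Q_row F p : \sum_y QQ p y * F y = QQ p (vs p) * F (vs p).
Proof.
rewrite (bigD1 (vs p)) //= big1 ?addr0 // => y neq_y.
by rewrite Q_eq0 ?mul0r.
Qed.

Lemma sum_Q_col F q : \sum_x F x * QQ x q = F (vs q) * QQ (vs q) q.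
Proof.
rewrite (bigD1 (vs q)) //= big1 ?addr0 // => x neq_x.
by rewrite Q_antisym Q_eq0 ?oppr0 ?mulr0.
Qed.

Lemma Q_fixed_transpose A B :
  (forall p q, actL2 A QQ p q = QQ p q) -> comp B A =2 @idE V ->
  forall x y, QQ (vs y) y * A y x = B (vs x) (vs y) * QQ (vs x) x.
Proof.
move=> fixQ BA x y; have := actL2_fixed_adjoint fixQ BA (vs y) x.
by rewrite sum_Q_row sum_Q_col vstarK.
Qed.

End QForm.

Theorem lemma4p7 (V : finType) (adj : rel V)
  (adj_sym : symmetric adj) (adj_irr : irreflexive adj)
  (g : nat) (cardV : #|V| = (2 * g)%N)
  (star : letter V -> letter V) (star_bij : bijective star)
  (star_star : forall u, star (star u) = linv u)
  (a : 'I_g -> letter V)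
  (a_cover : forall x : V, exists i : 'I_g,
      x = bar (a i) \/ x = bar (star (a i)))
  (Q_nonzero : exists p q : V, Q adj star a p q != 0)
  (A : endo V) (A_in_G : inG adj star a A)
  (A_fixes_Q : forall p q : V, actL2 A (Q adj star a) p q = Q adj star a p q) :
  forall x y : V, x \in suppQ adj star a -> y \in suppQ adj star a ->
    A y x != 0 -> x = y \/ Qdom adj star x y.
Proof.
move=> x y _ Sy Ayx; have [-> | neq_xy] := eqVneq x y; [by left | right].
have [B trB BA] := inG_left_inverse adj_sym A_in_G.
have x_ge_y : vge adj x y.
  by case: (inG_vge_triangular adj_sym A_in_G Ayx) => // /eqP; rewrite (negbTE neq_xy).
rewrite /Qdom x_ge_y !andbT.
have [-> | _] := eqVneq x (vstar star y); rewrite ?orbT // orbF.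
have Q_vsy_y : Q adj star a (vstar star y) y != 0.
  have := Q_vstar_neq0 adj_irr cardV star_star a_cover (suppQ_vstar star_star Sy).
  by rewrite vstarK.
have B_neq0 : B (vstar star x) (vstar star y) != 0.
  have : Q adj star a (vstar star y) y * A y x != 0 by rewrite mulf_neq0.
  by rewrite (Q_fixed_transpose star_star A_fixes_Q BA) mulf_eq0 negb_or => /andP[].
case: (trB _ _ B_neq0) => // /(can_inj (vstarK star_star))/eqP.
by rewrite eq_sym (negbTE neq_xy).
Qed.
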